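(* Let $k\ge 2$ be a power of $2$ and let $S$ be a subset of $\mathbb F_k^2$. Then there exists $\mathbf u\in\mathbb F_k^2$ such that for every subset $Z\subseteq\mathbb F_k$ with exactly $k/2$ elements, \[|\{\mathbf s\in S:\mathbf s\cdot\mathbf u\in Z\}|\le\frac{|S|+k^{1.5}}{2}.\]
   Context: $\mathbb F_k$ is the finite field with $k$ elements, and for $\mathbf s=(s_1,s_2),\mathbf u=(u_1,u_2)\in\mathbb F_k^2$, $\mathbf s\cdot\mathbf u=s_1u_1+s_2u_2\in\mathbb F_k$. *)

From HB Require Import structures.
From mathcomp Require Import all_boot all_order all_algebra all_field.
From mathcomp Require Import reals.
Set Implicit Arguments. Unset Strict Implicit. Unset Printing Implicit Defensive.
Import Order.TTheory GRing.Theory Num.Theory.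
Local Open Scope ring_scope.

Definition dot2 (F : fieldType) (s u : F * F) : F := s.1 * u.1 + s.2 * u.2.

From HB Require Import structures.
From mathcomp Require Import all_boot all_order all_algebra all_field.
From mathcomp Require Import reals ring lra zify.
Import Order.TTheory GRing.Theory Num.Theory.
Local Open Scope ring_scope.

(* Let c(u) count the pairs (s, s') in S^2 with s.u = s'.u.  Distinct points
   collide for exactly k of the k^2 directions u and equal points for all of
   them, so some u has k c(u) <= |S|^2 + |S| k.  Split S into the A points with
   s.u in Z and the B others; Cauchy-Schwarz over the fibres of s |-> s.u gives
   A^2 + B^2 <= (k/2) c(u), hence (A - B)^2 = 2 (A^2 + B^2) - |S|^2 <= |S| k
   <= k^3. *)

Lemma sqr_sum_le_card_mul_sum_sqr (R : realDomainType) (I : finType)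
    (A : {pred I}) (x : I -> R) :
  (\sum_(i in A) x i) ^+ 2 <= #|A|%:R * \sum_(i in A) x i ^+ 2.
Proof.
set X := \sum_(i in A) x i; set Y := \sum_(i in A) x i ^+ 2.
have sum_sqr_diff : \sum_(i in A) \sum_(j in A) (x i - x j) ^+ 2 =
    (#|A|%:R * Y - X ^+ 2) *+ 2.
  rewrite (eq_bigr (fun i => #|A|%:R * x i ^+ 2 + Y - (x i * X) *+ 2)).
    rewrite sumrB big_split /= sumr_const -mulr_sumr sumrMnl -mulr_suml.
    by rewrite -[Y *+ _]mulr_natl -/X -/Y mulrnBl; congr (_ - _); ring.
  move=> i _; rewrite (eq_bigr (fun j => x i ^+ 2 + x j ^+ 2 - (x i * x j) *+ 2)).
    by rewrite sumrB big_split /= sumr_const sumrMnl -mulr_sumr mulr_natl.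
  by move=> j _; ring.
have : 0 <= \sum_(i in A) \sum_(j in A) (x i - x j) ^+ 2.
  by apply: sumr_ge0 => i _; apply: sumr_ge0 => j _; exact: sqr_ge0.
by rewrite sum_sqr_diff pmulrn_lge0 // subr_ge0.
Qed.

Lemma card_set_sum_nat (T : finType) (P : pred T) :
  #|[set x | P x]| = (\sum_x (P x : nat))%N.
Proof. by rewrite -sum1_card big_mkcond; apply: eq_bigr => x _; rewrite inE. Qed.

Lemma sum_card_exchange (T U : finType) (B : {pred U}) (P : T -> U -> bool) :
  (\sum_x #|[set y in B | P x y]| = \sum_(y in B) #|[set x | P x y]|)%N.
Proof.
under eq_bigr do rewrite card_set_sum_nat.
rewrite exchange_big [RHS]big_mkcond /=; apply: eq_bigr => y _.
by case: (y \in B); [rewrite (@card_set_sum_nat _ (P^~ y)) | rewrite big1].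
Qed.

Section Fibres.
Context {T U : finType} (f : T -> U) (S : {set T}).

Definition fibre (t : U) : {set T} := [set s in S | f s == t].

Definition collisions : nat := (\sum_t #|fibre t| ^ 2)%N.

Lemma card_preimset_sum (Z : {pred U}) :
  #|[set s in S | f s \in Z]| = (\sum_(t in Z) #|fibre t|)%N.
Proof.
rewrite -sum1_card (partition_big f (fun t => t \in Z)) => [|s]; last first.
  by rewrite inE => /andP[].
apply: eq_bigr => t tZ; rewrite -sum1_card; apply: eq_bigl => s.
by rewrite !inE; case: eqP => [->|]; rewrite ?tZ ?andbT ?andbF.
Qed.

Lemma sum_card_fibre : (\sum_t #|fibre t|)%N = #|S|.
Proof.
by rewrite -(card_preimset_sum predT); apply: eq_card => s; rewrite inE andbT.
Qed.

Lemma collisionsE : collisions = (\sum_(s in S) #|fibre (f s)|)%N.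
Proof.
rewrite (partition_big f predT) //; apply: eq_bigr => t _.
rewrite (eq_bigr (fun=> #|fibre t|)) => [|s /andP[_ /eqP ->] //].
rewrite sum_nat_const -mulnn; congr (_ * _)%N.
by apply: eq_card => s; rewrite inE.
Qed.

Lemma half_split_collisions (R : realDomainType) (Z : {set U}) :
    #|U| = (2 * #|Z|)%N ->
  ((2 * #|[set s in S | f s \in Z]|)%:R - #|S|%:R) ^+ 2 + #|S|%:R ^+ 2
    <= (#|U| * collisions)%:R :> R.
Proof.
move=> cardU.
have cardZc : #|~: Z| = #|Z| by rewrite cardsCs setCK; lia.
have splitZ (G : U -> nat) :
    (\sum_t G t = \sum_(t in Z) G t + \sum_(t in ~: Z) G t)%N.
  by rewrite (bigID [in Z]) /=; congr (_ + _); apply: eq_bigl => t; rewrite inE.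
have cs (Y : {set U}) : ((\sum_(t in Y) #|fibre t|)%:R) ^+ 2
    <= #|Y|%:R * (\sum_(t in Y) #|fibre t| ^ 2)%:R :> R.
  rewrite !natr_sum; under [X in _ <= _ * X]eq_bigr do rewrite natrX.
  exact: sqr_sum_le_card_mul_sum_sqr.
rewrite /collisions cardU card_preimset_sum -sum_card_fibre !splitZ.
have := cs Z; have := cs (~: Z); rewrite cardZc !natrM !natrD.
(* (A - B)^2 + (A + B)^2 = 2 (A^2 + B^2) *)
nra.
Qed.

End Fibres.

Lemma dot2B (F : fieldType) (s s' v : F * F) :
  dot2 s v - dot2 s' v = dot2 (s - s') v.
Proof. by rewrite /dot2 /=; ring. Qed.

Section Dot2.
Context {F : finFieldType}.

Lemma card_dot2_eq0 (w : F * F) : w != 0 -> #|[set v | dot2 w v == 0]| = #|F|.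
Proof.
case: w => a b w_neq0; rewrite -cardsT.
have [b0 | b_neq0] := eqVneq b 0.
  have a_neq0 : a != 0 by apply: contraNneq w_neq0 => a0; rewrite a0 b0.
  have inj : injective (pair 0 : F -> F * F) by move=> y y' [].
  rewrite -(card_imset _ inj); apply: eq_card => -[x y].
  rewrite !inE /dot2 /= b0 mul0r addr0 mulf_eq0 (negPf a_neq0) /=.
  apply/eqP/imsetP => [-> | [y' _ [-> _]]] //; by exists y.
pose g x : F * F := (x, - (a * x) / b).
have inj : injective g by move=> x x' [].
rewrite -(card_imset _ inj); apply: eq_card => -[x y].
rewrite !inE /dot2 /=; apply/eqP/imsetP => [abxy | [x' _ [-> ->]]].
  exists x => //; congr pair.
  by rewrite -[y](mulKf b_neq0) -(addKr (a * x) (b * y)) abxy addr0 mulrC.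
by field.
Qed.

Lemma card_dot2_eq (s s' : F * F) :
  #|[set v | dot2 s v == dot2 s' v]| = if s == s' then (#|F| ^ 2)%N else #|F|.
Proof.
have [-> | s_neq_s'] := eqVneq s s'.
  by rewrite -mulnn -card_prod -cardsT; apply: eq_card => v; rewrite !inE eqxx.
rewrite -(@card_dot2_eq0 (s - s')) ?subr_eq0 //.
by apply: eq_card => v; rewrite !inE -dot2B subr_eq0.
Qed.

Lemma sum_collisions_dot2 (S : {set F * F}) :
  (\sum_(v : F * F) collisions (fun s => dot2 s v) S
     <= #|S| * (#|F| ^ 2 + #|S| * #|F|))%N.
Proof.
under eq_bigr do rewrite collisionsE.
rewrite exchange_big /= -sum_nat_const; apply: leq_sum => s sS.
rewrite /fibre (@sum_card_exchange _ _ _ (fun v s' => dot2 s' v == dot2 s v)).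
under eq_bigr do rewrite card_dot2_eq.
rewrite (bigD1 s) //= eqxx leq_add2l.
rewrite (eq_bigr (fun=> #|F|)) => [|s' /andP[_ /negPf ->] //].
rewrite sum_nat_const leq_mul2r; apply/orP; right.
by apply/subset_leq_card/subsetP => x /andP[].
Qed.

Lemma exists_dot2_few_collisions (S : {set F * F}) :
  exists u : F * F,
    (#|F| * collisions (fun s => dot2 s u) S <= #|S| * (#|S| + #|F|))%N.
Proof.
have [u _ u_min] :=
  @arg_minnP _ (0 : F * F) xpredT (fun u => collisions (fun s => dot2 s u) S) isT.
exists u; have F_gt0 : (0 < #|F|)%N by apply/card_gt0P; exists 0.
rewrite -(leq_pmul2l F_gt0) mulnA.
have : (#|F| * #|F| * collisions (fun s => dot2 s u) S
        <= #|S| * (#|F| ^ 2 + #|S| * #|F|))%N.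
  apply: leq_trans (sum_collisions_dot2 S).
  by rewrite -card_prod -sum_nat_const; apply: leq_sum => v _; exact: u_min.
by rewrite -mulnn; nia.
Qed.

End Dot2.

Lemma pow2_half (m : nat) : (2 <= 2 ^ m -> 2 ^ m = 2 * (2 ^ m %/ 2))%N.
Proof. by case: m => // m _; rewrite expnS mulKn. Qed.

Theorem mainTheorem2 (R : realType) (F : finFieldType) (k : nat)
  (hk2 : (2 <= k)%N) (hpow : exists m : nat, k = (2 ^ m)%N) (hF : #|F| = k)
  (S : {set F * F}) :
  exists u : F * F, forall Z : {set F}, #|Z| = (k %/ 2)%N ->
    (#|[set s in S | dot2 s u \in Z]|%:R : R)
      <= (#|S|%:R + k%:R * Num.sqrt (k%:R)) / 2.
Proof.
have [u few_collisions] := exists_dot2_few_collisions S.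
exists u => Z cardZ.
have cardF : #|F| = (2 * #|Z|)%N.
  by have [m km] := hpow; rewrite hF cardZ km -pow2_half -?km.
have := half_split_collisions (fun s => dot2 s u) S R Z cardF.
have : (#|S| <= k * k)%N by rewrite -hF -card_prod max_card.
move: few_collisions; rewrite hF.
set a := #|[set s in S | dot2 s u \in Z]|; set n := #|S|.
rewrite -!(ler_nat R) !natrM !natrD => few S_le split.
have sqrt_k := sqr_sqrtr (ler0n R k).
have deviation_sq : (2%:R * a%:R - n%:R) ^+ 2 <= (k%:R * Num.sqrt k%:R) ^+ 2 :> R.
  by rewrite exprMn sqrt_k; nra.
have : (0 : R) <= k%:R * Num.sqrt k%:R by rewrite mulr_ge0 ?sqrtr_ge0.
nra.
Qed.
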